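(* Let $\mathbb{F}$ be an algebraically closed field of characteristic $p>2$. Let $(V,[\cdot,\cdot]_V,\alpha_V,B_V)$ be an involutive quadratic Hom-Lie algebra over $\mathbb{F}$, $\mathscr{D}\in\mathrm{Der}_{\alpha_V}(V)$ such that $B_V$ is $\mathscr{D}$-invariant, and $x_0\in V$, $\lambda,\lambda_0\in\mathbb{F}$ with $\lambda\mathscr{D}+\mathrm{ad}_V(x_0)=\mathscr{D}$, $\alpha_V(\mathscr{D}(x_0))=-\mathscr{D}(x_0)$, $\alpha_V\circ\mathscr{D}^2-\mathscr{D}^2\circ\alpha_V=\mathrm{ad}_V(\mathscr{D}(x_0))$. Let $L=\mathbb{F}e^*\oplus V\oplus\mathbb{F}e$ with the skew-symmetric bilinear bracket $[x,y]=[x,y]_V+B_V(\mathscr{D}(x),y)e$, $[e^*,x]=-[x,e^*]=\mathscr{D}(x)$ ($x,y\in V$), $[e^*,e^*]=0$, $[e,z]=[z,e]=0$ ($z\in L$), and twist $\alpha(x)=\alpha_V(x)+B_V(x_0,x)e$, $\alpha(e^* )=\lambda e^*+x_0+\lambda_0e$, $\alpha(e)=\lambda e$. Then for all $u,v\in V$ and $1\le i\le p-1$, $s_i^L(u,v)=s_i^V(u,v)+\eta_i^V(u,v)e$.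
   Context: Hom-Lie algebra: $(\mathfrak g,[\cdot,\cdot],\alpha)$ with $[x,y]=-[y,x]$, $[\alpha(x),[y,z]]+[\alpha(y),[z,x]]+[\alpha(z),[x,y]]=0$, $\alpha([x,y])=[\alpha x,\alpha y]$; involutive: $\alpha^2=\mathrm{id}$; quadratic: symmetric nondegenerate bilinear $B$ with $B([x,y],z)=B(x,[y,z])$ and $B(\alpha x,y)=B(x,\alpha y)$. $\mathrm{Der}_{\alpha_V}(V)$: linear $\mathscr{D}$ with $\mathscr{D}\alpha_V=\alpha_V\mathscr{D}$, $\mathscr{D}[x,y]_V=[\mathscr{D}x,\alpha_Vy]_V+[\alpha_Vx,\mathscr{D}y]_V$. For $p>2$, $B_V$ is $\mathscr{D}$-invariant if $B_V(\mathscr{D}x,y)+B_V(x,\mathscr{D}y)=0$. For a Hom-Lie algebra $\mathfrak g$ with twist $\alpha$, the elements $s_i^{\mathfrak g}(x,y)$ ($1\le i\le p-1$) are defined by the polynomial identity in $k\in\mathbb{F}$: $\mathrm{ad}(\alpha^{p-2}(kx+y))\circ\mathrm{ad}(\alpha^{p-3}(kx+y))\circ\cdots\circ\mathrm{ad}(kx+y)(x)=\sum_{i=1}^{p-1}is_i^{\mathfrak g}(x,y)k^{i-1}$ (here $\mathrm{ad}(z)=[z,\cdot]$; $s_i^L$ uses $L$'s bracket and $\alpha$, $s_i^V$ uses $[\cdot,\cdot]_V,\alpha_V$). The scalars $\eta_i^V(u,v)$ are defined by $B_V\big(\mathscr{D}(\alpha_V^{p-2}(ku+v)),\mathrm{ad}_V(\alpha_V^{p-3}(ku+v))\circ\cdots\circ\mathrm{ad}_V(ku+v)(u)\big)=\sum_{i=1}^{p-1}i\eta_i^V(u,v)k^{i-1}$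 for all $k\in\mathbb{F}$. *)

From HB Require Import structures.
From mathcomp Require Import all_boot all_order all_algebra.
Set Implicit Arguments. Unset Strict Implicit. Unset Printing Implicit Defensive.
Import Order.TTheory GRing.Theory Num.Theory.
Local Open Scope ring_scope.

Fixpoint adchain (T : Type) (br : T -> T -> T) (al : T -> T) (n : nat) (z w : T) : T :=
  match n with
  | O => w
  | S n' => br (iter n' al z) (adchain br al n' z w)
  end.

(* s : nat -> T satisfies the defining polynomial identity of the s_i(x,y),
   i.e. for all k,
   ad(al^(p-2)(kx+y)) o ... o ad(kx+y) (x) = sum_{i=1}^{p-1} i s_i k^(i-1). *)
Definition is_s_family (F : fieldType) (T : lmodType F) (p : nat)
  (br : T -> T -> T) (al : T -> T) (x y : T) (s : nat -> T) : Prop :=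
  forall k : F,
    adchain br al p.-1 (k *: x + y) x
    = \sum_(1 <= i < p) ((i%:R * k ^+ i.-1) *: s i).

(* eta : nat -> F satisfies the defining identity of the eta_i^V(u,v):
   B(D(al^(p-2)(ku+v)), ad(al^(p-3)(ku+v)) o ... o ad(ku+v)(u))
     = sum_{i=1}^{p-1} i eta_i k^(i-1). *)
Definition is_eta_family (F : fieldType) (V : lmodType F) (p : nat)
  (brV : V -> V -> V) (alV : V -> V) (B : V -> V -> F) (D : V -> V)
  (u v : V) (eta : nat -> F) : Prop :=
  forall k : F,
    B (D (iter p.-2 alV (k *: u + v))) (adchain brV alV p.-2 (k *: u + v) u)
    = \sum_(1 <= i < p) (i%:R * eta i * k ^+ i.-1).

(* The extension L = F estar (+) V (+) F e, an element (a, x, b) stands for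
   a estar + x + b e. *)
Definition Lext (F : fieldType) (V : lmodType F) : lmodType F :=
  (F^o * V * F^o)%type.

Definition embV (F : fieldType) (V : lmodType F) (x : V) : Lext V :=
  ((0 : F^o), x, (0 : F^o)).

Definition e_vec (F : fieldType) (V : lmodType F) : Lext V :=
  ((0 : F^o), (0 : V), (1 : F^o)).

Definition brL (F : fieldType) (V : lmodType F)
  (brV : V -> V -> V) (B : V -> V -> F) (D : V -> V) (X Y : Lext V) : Lext V :=
  let: (a, x, _) := X in let: (a', y, _) := Y in
  ((0 : F^o), brV x y + a *: D y - a' *: D x, (B (D x) y : F^o)).

Definition alL (F : fieldType) (V : lmodType F)
  (alV : V -> V) (B : V -> V -> F) (x0 : V) (lam lam0 : F) (X : Lext V) : Lext V :=
  let: (a, x, b) := X in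
  ((a * lam : F^o), alV x + a *: x0, (a * lam0 + B x0 x + b * lam : F^o)).

From HB Require Import structures.
From mathcomp Require Import all_boot all_order all_algebra.
Set Implicit Arguments. Unset Strict Implicit. Unset Printing Implicit Defensive.
Import GRing.Theory.
Local Open Scope ring_scope.

(* Elements of V + Fe are stable under the twist and the bracket of L, on which
   they act on the V-component as alV and brV.  Hence the adjoint chain in L of
   elements of V is the chain in V plus a multiple of e, and the last bracket
   contributes exactly B(D(alV^(p-2)(ku+v)), chain_(p-2)) e: the right-hand side
   is an s-family of L.  An s-family is unique, since the defining identity is
   polynomial in k of degree < p - 1 (so the distinct points 0, ..., p-2 of F
   determine its coefficients) and the coefficients i, 0 < i < p, are units. *)

Lemma pchar_natr_inj (R : nzRingType) p m n :
  p \in [pchar R] -> (m < p)%N -> (n < p)%N -> m%:R = n%:R :> R -> m = n.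
Proof.
move=> pcharRp.
wlog le_mn : m n / (m <= n)%N => [hwlog m_lt_p n_lt_p eq_mn|m_lt_p n_lt_p eq_mn].
  have [le_mn|/ltnW le_nm] := leqP m n; first exact: hwlog.
  exact/esym/hwlog.
have [nm0|nm_gt0] := posnP (n - m).
  by apply/anti_leq; rewrite le_mn -subn_eq0 nm0.
have : (p %| n - m)%N by rewrite (dvdn_pcharf pcharRp) natrB // eq_mn subrr.
by rewrite gtnNdvd // (leq_ltn_trans (leq_subr _ _)).
Qed.

Section CoefficientExtraction.
Variables (F : fieldType) (W : lmodType F).

Lemma Vandermonde_sum_eq0 n (a : 'I_n -> F) (c : 'I_n -> W) :
  injective a -> (forall j, \sum_(i < n) a j ^+ i *: c i = 0) -> forall l, c l = 0.
Proof.
move=> a_inj vanish l.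
pose M := Vandermonde n (\row_j a j).
have M_unit : M \in unitmx.
  rewrite unitmxE det_Vandermonde unitfE; apply/prodf_neq0 => i _.
  apply/prodf_neq0 => j ij; rewrite !mxE subr_eq0; apply/eqP => /a_inj eq_ji.
  by rewrite eq_ji ltnn in ij.
transitivity (\sum_i (M *m invmx M) i l *: c i).
  rewrite mulmxV // (bigD1 l) //= big1 ?addr0; first by rewrite mxE eqxx scale1r.
  by move=> i /negbTE; rewrite mxE => ->; rewrite scale0r.
under eq_bigr => i _ do rewrite mxE scaler_suml.
rewrite exchange_big /=; apply: big1 => j _.
under eq_bigr => i _ do rewrite mxE mxE mulrC -scalerA.
by rewrite -scaler_sumr vanish scaler0.
Qed.

Lemma pchar_vanishing_sum_coef0 p n (c : 'I_n -> W) :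
  p \in [pchar F] -> (n <= p)%N ->
  (forall k : F, \sum_(i < n) k ^+ i *: c i = 0) -> forall i, c i = 0.
Proof.
move=> pcharFp le_np vanish; apply: (@Vandermonde_sum_eq0 n (fun j => (j : nat)%:R)).
  move=> i j /(pchar_natr_inj pcharFp) eq_ij; apply: val_inj; apply: eq_ij.
  - exact: leq_trans (ltn_ord i) le_np.
  - exact: leq_trans (ltn_ord j) le_np.
by move=> j; apply: vanish.
Qed.

End CoefficientExtraction.

Lemma is_s_family_unique (F : fieldType) (T : lmodType F) p br al (x y : T) s s' :
  p \in [pchar F] -> is_s_family p br al x y s -> is_s_family p br al x y s' ->
  forall i, (0 < i < p)%N -> s i = s' i.
Proof.
move=> pcharFp hs hs' i /andP[i_gt0 i_lt_p].
have p_gt0 : (0 < p)%N by rewrite prime_gt0 // (pcharf_prime pcharFp).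
pose d j := j.+1%:R *: (s j.+1 - s' j.+1).
have vanish k : \sum_(j < p.-1) k ^+ j *: d j = 0.
  have : \sum_(1 <= j < p) ((j%:R * k ^+ j.-1) *: (s j - s' j)) = 0.
    by under eq_bigr do rewrite scalerBr; rewrite sumrB -hs -hs' subrr.
  rewrite big_add1 big_mkord => sum_eq0; rewrite -[RHS]sum_eq0.
  apply: eq_bigr => j _.
  by rewrite /d scalerA mulrC.
have i_pred : (i.-1 < p.-1)%N by rewrite -ltnS !prednK.
have := pchar_vanishing_sum_coef0 pcharFp (leq_pred p) vanish (Ordinal i_pred).
rewrite /d /= prednK // => /eqP; rewrite scaler_eq0 subr_eq0 => /orP[|/eqP //].
by rewrite -(dvdn_pcharf pcharFp) gtnNdvd.
Qed.

Section CentralExtension.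
Variables (F : fieldType) (V : lmodType F).
Variables (brV : V -> V -> V) (alV : V -> V) (B : V -> V -> F) (D : V -> V).
Variables (x0 : V) (lam lam0 : F).

Local Notation brL := (brL brV B D).
Local Notation alL := (alL alV B x0 lam lam0).
Local Notation e := (e_vec V).

Lemma embV_is_linear : linear (@embV F V).
Proof. by move=> a x y; apply/eqP; rewrite !xpair_eqE /= scaler0 addr0 !eqxx. Qed.

HB.instance Definition _ :=
  GRing.isLinear.Build F V (Lext V) *:%R (@embV F V) embV_is_linear.

Lemma embV_add_e x b : embV x + b *: e = ((0 : F^o), x, (b : F^o)).
Proof.
by apply/eqP; rewrite !xpair_eqE /= !scaler0 !addr0 add0r [b%:A]mulr1 !eqxx.
Qed.

Lemma alL_embV_e x b :
  alL (embV x + b *: e) = embV (alV x) + (B x0 x + b * lam) *: e.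
Proof. by rewrite !embV_add_e /alL !mul0r scale0r addr0 add0r. Qed.

Lemma brL_embV_e x b y c :
  brL (embV x + b *: e) (embV y + c *: e) = embV (brV x y) + B (D x) y *: e.
Proof. by rewrite !embV_add_e /brL !scale0r addr0 subr0. Qed.

Lemma iter_alL_embV_mod_e n x :
  exists b, iter n alL (embV x) = embV (iter n alV x) + b *: e.
Proof.
elim: n => [|n [b IH]]; first by exists 0; rewrite scale0r addr0.
by exists (B x0 (iter n alV x) + b * lam); rewrite /= IH alL_embV_e.
Qed.

Lemma adchain_brL_embV_mod_e n z w :
  exists c,
    adchain brL alL n (embV z) (embV w) = embV (adchain brV alV n z w) + c *: e.
Proof.
elim: n => [|n [c IH]]; first by exists 0; rewrite scale0r addr0.
have [b iter_z] := iter_alL_embV_mod_e n z.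
exists (B (D (iter n alV z)) (adchain brV alV n z w)).
by rewrite /= IH iter_z brL_embV_e.
Qed.

Lemma adchain_brL_embV n z w :
  adchain brL alL n.+1 (embV z) (embV w)
  = embV (adchain brV alV n.+1 z w)
    + B (D (iter n alV z)) (adchain brV alV n z w) *: e.
Proof.
have [b iter_z] := iter_alL_embV_mod_e n z.
have [c chain_zw] := adchain_brL_embV_mod_e n z w.
by rewrite /= iter_z chain_zw brL_embV_e.
Qed.

Lemma is_s_family_embV p u v sV eta : (1 < p)%N ->
  is_s_family p brV alV u v sV -> is_eta_family p brV alV B D u v eta ->
  is_s_family p brL alL (embV u) (embV v) (fun i => embV (sV i) + eta i *: e).
Proof.
case: p => [|[|p]] // _ hsV heta k; rewrite -linearP adchain_brL_embV.
rewrite [adchain _ _ _ _ _]hsV heta.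
under [RHS]eq_bigr do rewrite scalerDr scalerA -linearZ.
rewrite big_split /= -linear_sum -scaler_suml.
by congr (embV _ + _ *: e); apply: eq_bigr => i _; rewrite mulrAC.
Qed.

End CentralExtension.

Theorem lemma4p3
  (F : closedFieldType) (p : nat) (Hchar : p \in [pchar F]) (Hp2 : (2 < p)%N)
  (V : lmodType F) (brV : V -> V -> V) (alV : V -> V) (B : V -> V -> F)
  (* [.,.]_V is bilinear and skew-symmetric *)
  (brV_linl : forall (a : F) (x y z : V), brV (a *: x + y) z = a *: brV x z + brV y z)
  (brV_linr : forall (a : F) (x y z : V), brV z (a *: x + y) = a *: brV z x + brV z y)
  (brV_skew : forall x y : V, brV x y = - brV y x)
  (* Hom-Jacobi identity *)
  (brV_jacobi : forall x y z : V,
      brV (alV x) (brV y z) + brV (alV y) (brV z x) + brV (alV z) (brV x y) = 0)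
  (* alpha_V linear, multiplicative, involutive *)
  (alV_lin : forall (a : F) (x y : V), alV (a *: x + y) = a *: alV x + alV y)
  (alV_mult : forall x y : V, alV (brV x y) = brV (alV x) (alV y))
  (alV_invol : forall x : V, alV (alV x) = x)
  (* B_V symmetric, bilinear, nondegenerate, invariant, alpha-symmetric *)
  (B_linl : forall (a : F) (x y z : V), B (a *: x + y) z = a * B x z + B y z)
  (B_linr : forall (a : F) (x y z : V), B z (a *: x + y) = a * B z x + B z y)
  (B_sym : forall x y : V, B x y = B y x)
  (B_nondeg : forall x : V, (forall y : V, B x y = 0) -> x = 0)
  (B_inv : forall x y z : V, B (brV x y) z = B x (brV y z))
  (B_alpha : forall x y : V, B (alV x) y = B x (alV y))
  (* D in Der_{alpha_V}(V) *)
  (D : V -> V)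
  (D_lin : forall (a : F) (x y : V), D (a *: x + y) = a *: D x + D y)
  (D_alV : forall x : V, D (alV x) = alV (D x))
  (D_der : forall x y : V, D (brV x y) = brV (D x) (alV y) + brV (alV x) (D y))
  (* B_V is D-invariant *)
  (B_D : forall x y : V, B (D x) y + B x (D y) = 0)
  (x0 : V) (lam lam0 : F)
  (H1 : forall x : V, lam *: D x + brV x0 x = D x)
  (H2 : alV (D x0) = - D x0)
  (H3 : forall x : V, alV (D (D x)) - D (D (alV x)) = brV (D x0) x)
  (u v : V) (sL : nat -> Lext V) (sV : nat -> V) (eta : nat -> F)
  (HsL : is_s_family p (brL brV B D) (alL alV B x0 lam lam0) (embV u) (embV v) sL)
  (HsV : is_s_family p brV alV u v sV)
  (Heta : is_eta_family p brV alV B D u v eta) :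
  forall i : nat, (1 <= i < p)%N -> sL i = embV (sV i) + eta i *: e_vec V.
Proof.
apply: (is_s_family_unique Hchar HsL).
exact: is_s_family_embV (ltnW Hp2) HsV Heta.
Qed.
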